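(* Let $b\ge2$ and let $S$ be a nonempty subset of $\mathbb{Z}$. Then all $b$-orderings $\mathbf{a}$ of $S$ give the same values $\alpha_k(S,b,\mathbf{a})$ for each $k$, and, writing $\alpha_k(S,b)$ for this common value, $$\alpha_k(S,b)=\alpha_k(\varphi_b(S))\quad\text{for all } k\ge1,$$ where $\alpha_k(\varphi_b(S))$ is the $t$-exponent sequence of the set $\varphi_b(S)\subseteq\mathbb{Q}[[t]]$.
   Context: For $b\ge2$ and $a\in\mathbb{Z}$, $\operatorname{ord}_b(a)$ is the largest $k\in\mathbb{N}$ with $b^k\mid a$ ($+\infty$ for $a=0$). A $b$-ordering of $S$ is a sequence $\mathbf{a}=(a_i)_{i\ge0}$ in $S$ such that for each $i\ge1$, $a_i$ attains $\min_{a'\in S}\sum_{j=0}^{i-1}\operatorname{ord}_b(a'-a_j)$; $\alpha_k(S,b,\mathbf{a}):=\sum_{j=0}^{k-1}\operatorname{ord}_b(a_k-a_j)$. The map $\varphi_b:\mathbb{Z}\to\mathbb{Q}[[t]]$ is $\varphi_b(a)=\sum_{k\ge0}d_k t^k$ where $d_k=\lfloor a/b^k\rfloor-b\lfloor a/b^{k+1}\rfloor$ are the base-$b$ digits of $a$. For $f\in\mathbb{Q}[[t]]$, $\operatorname{ord}_t(f)$ is the largest $\alpha$ with $t^\alpha\mid f$ ($+\infty$ for $f=0$). For nonempty $U\subseteq\mathbb{Q}[[t]]$, a $t$-ordering of $U$ is a sequence $(f_i)_{i\ge0}$ in $U$ with each $f_k$ ($k\ge1$) minimizing $\sum_{j=0}^{k-1}\operatorname{ord}_t(f_k-f_j)$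 over $U$; the $t$-exponent sequence $\alpha_k(U):=\sum_{j=0}^{k-1}\operatorname{ord}_t(f_k-f_j)$ for any $t$-ordering (independent of the choice). *)

From mathcomp Require Import all_boot all_order all_algebra.
From Stdlib Require Import ClassicalEpsilon.
Set Implicit Arguments. Unset Strict Implicit. Unset Printing Implicit Defensive.
Import Order.TTheory GRing.Theory Num.Theory.

(* Extended naturals N ∪ {+oo}: [Some n] is n, [None] is +oo. *)
Definition enat := option nat.
Definition eadd (x y : enat) : enat :=
  match x, y with Some m, Some n => Some (m + n)%N | _, _ => None end.
Definition ele (x y : enat) : bool :=
  match x, y with
  | _, None => true
  | None, Some _ => false
  | Some m, Some n => (m <= n)%N
  end.

(* ord_b(a): largest k with b^k | a, +oo for a = 0.  For a <> 0 such k
   satisfies k <= |a| (as b >= 2), so a bounded max suffices. *)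
Definition ordb (b : nat) (a : int) : enat :=
  if a == 0%R then None
  else Some (\max_(k < `|a|%N.+1 | (b ^ k)%N %| `|a|%N) k)%N.

Definition bsum (b : nat) (a : nat -> int) (i : nat) (x : int) : enat :=
  \big[eadd/Some 0%N]_(j < i) ordb b (x - a j)%R.

Definition b_ordering (b : nat) (S : int -> Prop) (a : nat -> int) : Prop :=
  (forall i, S (a i)) /\
  (forall i, (1 <= i)%N -> forall x, S x -> ele (bsum b a i (a i)) (bsum b a i x)).

Definition alpha_b (b : nat) (a : nat -> int) (k : nat) : enat := bsum b a k (a k).

Definition pseries := nat -> rat.

Definition psub (f g : pseries) : pseries := fun n => (f n - g n)%R.

Definition ordt (f : pseries) : enat :=
  match excluded_middle_informative (exists n, f n != 0%R) with
  | left H => Some (ex_minn H)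
  | right _ => None
  end.

(* base-b digits: d_k = floor(a/b^k) - b floor(a/b^(k+1)) (floor division) *)
Definition phi (b : nat) (a : int) : pseries :=
  fun k => ((a %/ (b ^ k)%N%:Z)%Z - b%:Z * (a %/ (b ^ k.+1)%N%:Z)%Z)%:~R%R.

Definition phi_image (b : nat) (S : int -> Prop) : pseries -> Prop :=
  fun f => exists s, S s /\ f = phi b s.

Definition tsum (f : nat -> pseries) (i : nat) (g : pseries) : enat :=
  \big[eadd/Some 0%N]_(j < i) ordt (psub g (f j)).

Definition t_ordering (U : pseries -> Prop) (f : nat -> pseries) : Prop :=
  (forall i, U (f i)) /\
  (forall i, (1 <= i)%N -> forall g, U g -> ele (tsum f i (f i)) (tsum f i g)).

Definition alpha_t (f : nat -> pseries) (k : nat) : enat := tsum f k (f k).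

From HB Require Import structures.
From mathcomp Require Import all_boot all_order all_algebra.
From mathcomp Require Import zify ring.
From Stdlib Require Import Classical ClassicalEpsilon.
Set Implicit Arguments. Unset Strict Implicit. Unset Printing Implicit Defensive.
Import Order.TTheory GRing.Theory Num.Theory.

(* The partial sum alpha_0 + ... + alpha_(n-1) of a b-ordering is the energy of its first
   n terms, i.e. the sum of ord_b(x - y) over their pairs, and it is the least energy of
   any n-term sequence in S.  Indeed, for a sequence Y longer than a prefix A, repeated
   pigeonholing over the residue classes mod b, b^2, ... yields y in Y whose class holds
   more points of Y than of A at every level; since ord_b(y - z) counts the levels at
   which z lies in the class of y, the cost of y against A is at most its cost against
   the rest of Y, and induction on n concludes.  So the partial sums, hence the alpha_k,
   do not depend on the ordering.  Finally phi_b is injective with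
   ord_t(phi_b x - phi_b y) = ord_b(x - y), so it maps the b-orderings of S exactly onto
   the t-orderings of phi_b(S). *)

Lemma eaddA : associative eadd.
Proof. by case=> [x|] [y|] [z|] //=; rewrite addnA. Qed.

Lemma eaddC : commutative eadd.
Proof. by case=> [x|] [y|] //=; rewrite addnC. Qed.

Lemma add0e : left_id (Some 0%N) eadd.
Proof. by case. Qed.

HB.instance Definition _ := Monoid.isComLaw.Build enat (Some 0%N) eadd eaddA eaddC add0e.

Lemma eaddNone (x : enat) : eadd x None = None.
Proof. by case: x. Qed.

Lemma ele_None (x : enat) : ele x None.
Proof. by case: x. Qed.

Lemma ele_refl (x : enat) : ele x x.
Proof. by case: x => /=. Qed.

Lemma ele_trans (x y z : enat) : ele x y -> ele y z -> ele x z.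
Proof. by case: x => [x|]; case: y => [y|]; case: z => [z|] //=; apply: leq_trans. Qed.

Lemma ele_anti (x y : enat) : ele x y -> ele y x -> x = y.
Proof.
by case: x => [x|]; case: y => [y|] //= h1 h2; congr Some; apply/eqP; rewrite eqn_leq h1.
Qed.

Lemma ele_add (x y x' y' : enat) : ele x y -> ele x' y' -> ele (eadd x x') (eadd y y').
Proof.
by case: x => [x|]; case: y => [y|]; case: x' => [x'|]; case: y' => [y'|] //=; apply: leq_add.
Qed.

Lemma ele_addr (x y : enat) : ele x (eadd x y).
Proof. by case: x => [x|]; case: y => [y|] //=; apply: leq_addr. Qed.

Lemma big_eadd_Some (T : eqType) (s : seq T) (F : T -> enat) (g : T -> nat) :
  (forall z, z \in s -> F z = Some (g z)) ->
  \big[eadd/Some 0%N]_(z <- s) F z = Some (\sum_(z <- s) g z).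
Proof.
move=> Fg; rewrite (eq_big_seq (fun z => Some (g z))) //.
by rewrite (big_morph Some (id1 := Some 0%N) (op1 := eadd)).
Qed.

Lemma sum_ord_ltn (M v : nat) : \sum_(m < M) (m < v : nat) = minn v M.
Proof.
by elim: M => [|M IH]; rewrite ?big_ord0 ?minn0 // big_ord_recr /= IH; case: ltnP; lia.
Qed.

Lemma sum_count (T : Type) (P : pred T) (s : seq T) : \sum_(z <- s) (P z : nat) = count P s.
Proof. by rewrite -sumn_count sumnE big_map. Qed.

Local Open Scope ring_scope.

Lemma ordb0 b : ordb b 0 = None.
Proof. by rewrite /ordb eqxx. Qed.

Lemma ordb_sym b x y : ordb b (x - y) = ordb b (y - x).
Proof. by rewrite /ordb -opprB oppr_eq0 abszN. Qed.

Lemma ordb_spec (b : nat) (a : int) : (1 < b)%N -> a != 0 ->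
  exists v, ordb b a = Some v /\ forall k, ((b ^ k)%N%:Z %| a)%Z = (k <= v)%N.
Proof.
move=> hb ha; rewrite /ordb (negbTE ha).
set v := (\max_(k < _ | _) _)%N.
have hv : ((b ^ v) %| `|a|)%N.
  by rewrite /v; elim/big_ind: _ => // x y hx hy; rewrite /maxn; case: ifP.
exists v; split => // k; rewrite dvdzE /=; apply/idP/idP => hk; last first.
  exact: dvdn_trans (dvdn_exp2l b hk) hv.
have kl : (k < `|a|.+1)%N.
  by rewrite ltnS (leq_trans (ltnW (ltn_expl k hb))) // dvdn_leq // absz_gt0.
exact: (leq_bigmax_cond (Ordinal kl) hk).
Qed.

Definition bclass (b m : nat) (y : int) : pred int := fun z => (z == y %[mod (b ^ m)%N])%Z.

Lemma bclass0 b y z : bclass b 0 y z.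
Proof. by rewrite /bclass expn0 !modz1. Qed.

Lemma bclassE b m y z : bclass b m y z = ((b ^ m)%N%:Z %| z - y)%Z.
Proof. exact: eqz_mod_dvd. Qed.

Lemma bclass_le b m n y z : (m <= n)%N -> bclass b n y z -> bclass b m y z.
Proof. by move=> hmn; rewrite !bclassE; apply: dvdz_trans; rewrite dvdzE /= dvdn_exp2l. Qed.

Lemma sum_count_fibers (U T : eqType) (f : U -> T) (K : seq T) (s : seq U) : uniq K ->
  (\sum_(k <- K) count (fun z => f z == k) s)%N = count (fun z => f z \in K) s.
Proof.
move=> uK; elim: s => [|z s IH] /=; first by rewrite big1.
rewrite big_split /= IH -(count_uniq_mem _ uK); congr (_ + _)%N.
by rewrite -sum1_count [RHS]big_mkcond; apply: eq_bigr => k _; rewrite /= eq_sym; case: eqP.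
Qed.

Lemma pigeonhole_fiber (U T : eqType) (f : U -> T) (P : pred U) (A Y : seq U) :
  (forall x z, f x = f z -> P x = P z) -> (count P A < count P Y)%N ->
  exists2 y, y \in Y &
    P y && (count (fun z => f z == f y) A < count (fun z => f z == f y) Y)%N.
Proof.
move=> Pf hAY; apply/hasP; apply: contraTT hAY => /hasPn hY; rewrite -leqNgt.
set K := undup [seq f y | y <- Y & P y].
have PK z : f z \in K -> P z.
  by rewrite mem_undup => /mapP[y]; rewrite mem_filter => /andP[Py _] /Pf ->.
have KP z : z \in Y -> P z -> f z \in K.
  by move=> zY Pz; rewrite mem_undup; apply: map_f; rewrite mem_filter Pz.
rewrite (eq_in_count (a2 := fun z => f z \in K)); last first.
  by move=> z zY; apply/idP/idP => [/(KP z zY)|/PK].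
rewrite -sum_count_fibers ?undup_uniq //.
apply: leq_trans (sub_count PK A); rewrite -sum_count_fibers ?undup_uniq //.
rewrite big_seq [leqRHS]big_seq; apply: leq_sum => k.
rewrite mem_undup => /mapP[y]; rewrite mem_filter => /andP[Py yY] ->.
by have := hY y yY; rewrite Py /= -leqNgt.
Qed.

Lemma exists_deep_class b M (A Y : seq int) : (size A < size Y)%N ->
  exists2 y, y \in Y &
    forall m, (m <= M)%N -> (count (bclass b m y) A < count (bclass b m y) Y)%N.
Proof.
move=> hAY; elim: M => [|M [y yY IH]].
  case: Y hAY => [|y Y] // hAY; exists y; first exact: mem_head.
  move=> m; rewrite leqn0 => /eqP ->.
  by rewrite !(eq_count (a2 := predT)) ?count_predT // => z; apply: bclass0.
pose f z := (z %% (b ^ M.+1)%N)%Z.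
have Pf x z : f x = f z -> bclass b M y x = bclass b M y z.
  by move=> /eqP e; rewrite /bclass (eqP (bclass_le (leqnSn M) e)).
have [y' y'Y /andP[yy' hy']] := pigeonhole_fiber Pf (IH M (leqnn M)).
exists y' => // m; rewrite leq_eqVlt ltnS => /orP[/eqP ->|hm]; first exact: hy'.
have /eqP e := bclass_le hm yy'.
by rewrite /bclass e; apply: IH.
Qed.

Lemma ordb_levels b M y z : (1 < b)%N -> z != y -> (`|z - y| <= M)%N ->
  ordb b (z - y) = Some (\sum_(m < M) bclass b m.+1 y z)%N.
Proof.
move=> hb zy hM; have zy0 : z - y != 0 by rewrite subr_eq0.
have [v [-> Hk]] := ordb_spec hb zy0; congr Some.
have hv : (v <= M)%N.
  have := Hk v; rewrite leqnn dvdzE /= => /dvdn_leq; rewrite absz_gt0 zy0 => /(_ isT).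
  by have := ltn_expl v hb; lia.
by rewrite -(minn_idPl hv) -sum_ord_ltn; apply: eq_bigr => m _; rewrite bclassE Hk.
Qed.

Definition cost b (x : int) (s : seq int) : enat :=
  \big[eadd/Some 0%N]_(z <- s) ordb b (x - z).

Lemma cost_levels b M y s : (1 < b)%N -> y \notin s ->
  (forall z, z \in s -> `|z - y| <= M)%N ->
  cost b y s = Some (\sum_(m < M) count (bclass b m.+1 y) s)%N.
Proof.
move=> hb ys hM.
rewrite /cost (big_eadd_Some (g := fun z => \sum_(m < M) bclass b m.+1 y z)%N).
  by rewrite exchange_big; congr Some; apply: eq_bigr => m _; rewrite sum_count.
move=> z zs; rewrite ordb_sym; apply: ordb_levels; rewrite ?hM //.
by apply: contraNneq ys => <-.
Qed.

Lemma exists_cost_le b (A Y : seq int) : (1 < b)%N -> uniq Y -> (size A < size Y)%N ->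
  exists2 y, y \in Y & ele (cost b y A) (cost b y (rem y Y)).
Proof.
move=> hb uY hAY; set L := A ++ Y.
(* b^M > M bounds every difference, so the classes mod b^M separate the points of L. *)
pose M := (\sum_(x <- L) \sum_(z <- L) `|z - x|)%N.
have hM x z : x \in L -> z \in L -> (`|z - x| <= M)%N.
  move=> xL zL; rewrite /M (big_rem x xL) /=; apply: leq_trans (leq_addr _ _).
  by rewrite (big_rem z zL) /= leq_addr.
have [y yY hy] := exists_deep_class b M hAY.
have yL : y \in L by rewrite mem_cat yY orbT.
have sepM z : z \in L -> bclass b M y z -> z = y.
  move=> zL; case: (eqVneq z y) => // zy; rewrite bclassE dvdzE /=.
  move/dvdn_leq; rewrite absz_gt0 subr_eq0 zy => /(_ isT).
  by have := hM y z yL zL; have := ltn_expl M hb; lia.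
have remY z : z \in rem y Y -> (z \in L) && (z != y).
  by rewrite (mem_rem_uniq _ uY) /= mem_cat => /andP[-> ->]; rewrite orbT.
have countY (P : pred int) : P y -> count P Y = (count P (rem y Y)).+1.
  by move=> Py; rewrite (permP (perm_to_rem yY)) /= Py.
have yy m : bclass b m y y by rewrite /bclass.
have rem0 : count (bclass b M y) (rem y Y) = 0%N.
  apply/eqP; rewrite -leqn0 leqNgt -has_count; apply/hasP => -[z /remY /andP[zL zy]].
  by move/(sepM z zL)/eqP; rewrite (negPf zy).
have yA : y \notin A.
  apply: contraTN (hy M (leqnn M)) => yA.
  by rewrite countY // rem0 -leqNgt -has_count; apply/hasP; exists y.
have yrem : y \notin rem y Y by rewrite mem_rem_uniqF.
have hMy z : z \in L -> (`|z - y| <= M)%N by move=> zL; apply: hM.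
exists y => //.
rewrite (cost_levels (M := M) hb yA) => [|z zA]; last by apply: hMy; rewrite mem_cat zA.
rewrite (cost_levels (M := M) hb yrem) => [|z /remY /andP[zL _]]; last exact: hMy.
apply: leq_sum => m _; have := hy m.+1 (ltn_ord m).
by rewrite countY.
Qed.

Fixpoint energy b (s : seq int) : enat :=
  if s is x :: s' then eadd (cost b x s') (energy b s') else Some 0%N.

Lemma energy_rem b y s : y \in s -> energy b s = eadd (cost b y (rem y s)) (energy b (rem y s)).
Proof.
elim: s => [|x s IH] //=; rewrite in_cons.
case: (eqVneq y x) => [-> //|yx] /= ys.
rewrite IH // /cost (perm_big _ (perm_to_rem ys)) /= !big_cons ordb_sym.
by rewrite !eaddA; congr eadd; rewrite -!eaddA; congr eadd; apply: eaddC.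
Qed.

Lemma energy_not_uniq b s : ~~ uniq s -> energy b s = None.
Proof.
elim: s => [|x s IH] //=; rewrite negb_and negbK => /orP[xs|/IH ->]; last exact: eaddNone.
by rewrite /cost (big_rem x xs) /= subrr ordb0.
Qed.

Lemma cost_mkseq b a n x : cost b x (rev (mkseq a n)) = bsum b a n x.
Proof. by rewrite /cost big_rev big_map -(subn0 n) big_mkord subn0. Qed.

Lemma energy_mkseqS b a n :
  energy b (rev (mkseq a n.+1)) = eadd (alpha_b b a n) (energy b (rev (mkseq a n))).
Proof. by rewrite mkseqS rev_rcons /= cost_mkseq. Qed.

Lemma bsum_mono b a x i j : (i <= j)%N -> ele (bsum b a i x) (bsum b a j x).
Proof.
move=> /subnKC <-; elim: (j - i)%N => [|k IH]; first by rewrite addn0 ele_refl.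
by apply: ele_trans IH _; rewrite addnS /bsum big_ord_recr /= ele_addr.
Qed.

Lemma energy_mkseq_None b a n :
  energy b (rev (mkseq a n)) = None -> exists2 i, (i < n)%N & alpha_b b a i = None.
Proof.
elim: n => [//|n IH]; rewrite energy_mkseqS.
case E: (energy b _) IH => [v|] IH; last by case: IH => // i /ltnW; exists i.
by case An: (alpha_b b a n) => // _; exists n.
Qed.

Section BOrdering.

Variables (b : nat) (S : int -> Prop) (a : nat -> int).
Hypothesis (hb : (1 < b)%N) (ha : b_ordering b S a).

Lemma b_ordering_min i x : S x -> ele (alpha_b b a i) (bsum b a i x).
Proof. by case: i => [|i] Sx; [rewrite /alpha_b /bsum !big_ord0 | apply: ha.2]. Qed.

Lemma alpha_b_None i j : alpha_b b a i = None -> (i <= j)%N -> alpha_b b a j = None.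
Proof.
move=> ai ij; have := ele_trans (b_ordering_min i (ha.1 j)) (bsum_mono b a (a j) ij).
by rewrite ai /alpha_b; case: (bsum _ _ _ _).
Qed.

Lemma energy_mkseq_min n s : (forall z, z \in s -> S z) -> size s = n ->
  ele (energy b (rev (mkseq a n))) (energy b s).
Proof.
elim: n s => [|n IH] s sS sz; first by move/size0nil: sz => ->.
have [us|/energy_not_uniq ->] := boolP (uniq s); last exact: ele_None.
have [|y ys hy] := exists_cost_le (A := rev (mkseq a n)) hb us.
  by rewrite size_rev size_mkseq sz.
rewrite energy_mkseqS (energy_rem b ys); apply: ele_add.
  by apply: ele_trans (b_ordering_min n (sS y ys)) _; rewrite -cost_mkseq.
by apply: IH => [z /mem_rem /sS //|]; rewrite size_rem // sz.
Qed.

End BOrdering.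

Lemma energy_b_ordering_eq b S a a' n : (1 < b)%N -> b_ordering b S a -> b_ordering b S a' ->
  energy b (rev (mkseq a n)) = energy b (rev (mkseq a' n)).
Proof.
move=> hb ha ha'.
have inS c : b_ordering b S c -> forall z, z \in rev (mkseq c n) -> S z.
  by move=> [cS _] z; rewrite mem_rev => /mapP[i _ ->].
apply: ele_anti; apply: (energy_mkseq_min (S := S));
  by rewrite ?size_rev ?size_mkseq //; apply: inS.
Qed.

Lemma alpha_b_ordering_eq b S a a' k : (1 < b)%N -> b_ordering b S a -> b_ordering b S a' ->
  alpha_b b a k = alpha_b b a' k.
Proof.
move=> hb ha ha'; have := energy_b_ordering_eq k.+1 hb ha ha'.
have Ek := energy_b_ordering_eq k hb ha ha'; rewrite !energy_mkseqS Ek.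
case E: (energy b (rev (mkseq a' k))) => [v|]; last first.
  rewrite -Ek in E; have [i /ltnW ik ai] := energy_mkseq_None E.
  have [j /ltnW jk aj] := energy_mkseq_None (etrans (esym Ek) E).
  by rewrite (alpha_b_None ha ai ik) (alpha_b_None ha' aj jk).
by case: (alpha_b b a k) (alpha_b b a' k) => [u|] [w|] //= [] /addIn ->.
Qed.

Lemma exists_ele_min (T : Type) (P : T -> Prop) (c : T -> enat) :
  (exists y, P y) -> exists x, P x /\ forall y, P y -> ele (c x) (c y).
Proof.
move=> [y0 Py0].
have [[y [k [Py cy]]]|noSome] := classic (exists y k, P y /\ c y = Some k); last first.
  exists y0; split=> // y Py; case cy: (c y) => [k|]; last exact: ele_None.
  by case: noSome; exists y, k.
elim/ltn_ind: k y Py cy => k IH y Py cy.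
case: (classic (forall z, P z -> ele (c y) (c z))) => [ymin|]; first by exists y.
move=> /not_all_ex_not[z nz]; have {nz}[Pz] := imply_to_and _ _ nz.
rewrite cy; case cz: (c z) => [j|] //= kj.
by apply: IH z Pz cz; rewrite ltnNge; apply/negP.
Qed.

Definition greedy_next b (S : int -> Prop) (s : seq int) : int :=
  epsilon (inhabits 0) (fun x => S x /\ forall y, S y -> ele (cost b x s) (cost b y s)).

Fixpoint greedy_seq b S n : seq int :=
  if n is n'.+1 then greedy_next b S (greedy_seq b S n') :: greedy_seq b S n' else [::].

Definition greedy b S n : int := greedy_next b S (greedy_seq b S n).

Lemma greedy_nextP b S s : (exists x, S x) -> S (greedy_next b S s) /\
  forall y, S y -> ele (cost b (greedy_next b S s) s) (cost b y s).
Proof. by move=> hS; exact: (epsilon_spec (inhabits 0) _ (exists_ele_min (cost b^~ s) hS)). Qed.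

Lemma greedy_seqE b S n : greedy_seq b S n = rev (mkseq (greedy b S) n).
Proof. by elim: n => // n IH; rewrite mkseqS rev_rcons -IH. Qed.

Lemma greedy_b_ordering b S : (exists s, S s) -> b_ordering b S (greedy b S).
Proof.
move=> hS; split=> [i|i _ x Sx]; first exact: (greedy_nextP _ _ hS).1.
have := (greedy_nextP b (greedy_seq b S i) hS).2 x Sx.
by rewrite -/(greedy b S i) greedy_seqE !cost_mkseq.
Qed.

Definition digit (b k : nat) (x : int) : int :=
  (x %/ (b ^ k)%N%:Z)%Z - b%:Z * (x %/ (b ^ k.+1)%N%:Z)%Z.

Lemma digitE b k x : digit b k x = ((x %/ (b ^ k)%N%:Z)%Z %% b%:Z)%Z.
Proof. by rewrite /digit /modz expnSr PoszM divzMA_ge0 // mulrC. Qed.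

Lemma dvdz_expS_digit b m x y : (0 < b)%N -> ((b ^ m)%N%:Z %| x - y)%Z ->
  ((b ^ m.+1)%N%:Z %| x - y)%Z = (digit b m x == digit b m y).
Proof.
move=> hb hxy; have bm0 : (b ^ m)%N%:Z != 0 by rewrite eqz_nat -lt0n expn_gt0 hb.
have /eqP exy : (x == y %[mod (b ^ m)%N])%Z by rewrite eqz_mod_dvd.
have -> : x - y = ((x %/ (b ^ m)%N%:Z)%Z - (y %/ (b ^ m)%N%:Z)%Z) * (b ^ m)%N%:Z.
  by rewrite {1}(divz_eq x (b ^ m)%N) {1}(divz_eq y (b ^ m)%N) exy; ring.
by rewrite expnS PoszM dvdz_mul2r // -eqz_mod_dvd !digitE.
Qed.

Lemma phi_sub_neq0 b x y k : (psub (phi b x) (phi b y) k != 0) = (digit b k x != digit b k y).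
Proof. by rewrite /psub subr_eq0 eqr_int. Qed.

Lemma ordt_phi b x y : (1 < b)%N -> ordt (psub (phi b x) (phi b y)) = ordb b (x - y).
Proof.
move=> hb; have hb0 := ltnW hb.
have [->|xy] := eqVneq x y.
  rewrite subrr ordb0 /ordt; case: excluded_middle_informative => // H.
  by exfalso; case: H => n; rewrite phi_sub_neq0 eqxx.
have xy0 : x - y != 0 by rewrite subr_eq0.
have [v [-> Hk]] := ordb_spec hb xy0.
have dv : digit b v x != digit b v y by rewrite -dvdz_expS_digit // ?Hk ?ltnn.
have dk k : (k < v)%N -> digit b k x = digit b k y.
  by move=> kv; apply/eqP; rewrite -dvdz_expS_digit // Hk // ltnW.
rewrite /ordt; case: excluded_middle_informative => [H|[]]; last first.
  by exists v; rewrite phi_sub_neq0.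
congr Some; case: ex_minnP => n; rewrite phi_sub_neq0 => dn nmin.
apply/eqP; rewrite eqn_leq nmin ?phi_sub_neq0 //= leqNgt.
by apply: contra dn => /dk ->.
Qed.

Lemma phi_inj b : (1 < b)%N -> injective (phi b).
Proof.
move=> hb x y e; have := ordt_phi x y hb; rewrite e ordt_phi // subrr ordb0 /ordb.
by case: eqP => [/eqP|_ []] //; rewrite subr_eq0 => /eqP.
Qed.

Lemma tsum_phi b f a i x : (1 < b)%N -> (forall j, f j = phi b (a j)) ->
  tsum f i (phi b x) = bsum b a i x.
Proof. by move=> hb fa; apply: eq_bigr => j _; rewrite fa ordt_phi. Qed.

Lemma b_ordering_phi b S a f : (1 < b)%N -> (forall i, f i = phi b (a i)) ->
  b_ordering b S a <-> t_ordering (phi_image b S) f.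
Proof.
move=> hb fa; split=> [[aS amin]|[fS fmin]].
  split=> [i|i i1 _ [x [Sx ->]]]; first by exists (a i); rewrite fa.
  by rewrite fa !(tsum_phi _ _ hb fa); apply: amin.
split=> [i|i i1 x Sx].
  by have [s [Ss]] := fS i; rewrite fa => /(phi_inj hb) ->.
by have := fmin i i1 (phi b x) (ex_intro _ x (conj Sx erefl)); rewrite fa !(tsum_phi _ _ hb fa).
Qed.

Lemma phi_image_lift b S (f : nat -> pseries) : (forall i, phi_image b S (f i)) ->
  exists a, forall i, f i = phi b (a i).
Proof.
move=> fS; exists (fun i => sval (constructive_indefinite_description _ (fS i))) => i.
by case: constructive_indefinite_description => s [].
Qed.

Local Close Scope ring_scope.

Theorem theorem5p3 (b : nat) (S : int -> Prop) :
  (2 <= b)%N -> (exists s, S s) ->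
  (forall a a', b_ordering b S a -> b_ordering b S a' ->
     forall k, alpha_b b a k = alpha_b b a' k) /\
  (exists f, t_ordering (phi_image b S) f) /\
  (forall a f, b_ordering b S a -> t_ordering (phi_image b S) f ->
     forall k, (1 <= k)%N -> alpha_b b a k = alpha_t f k).
Proof.
move=> hb hS; split; [|split].
- by move=> a a' ha ha' k; apply: alpha_b_ordering_eq hb ha ha'.
- exists (fun i => phi b (greedy b S i)).
  by apply/(b_ordering_phi S hb) => //; apply: greedy_b_ordering.
- move=> a f ha hf k _; have [a' fa'] := phi_image_lift hf.1.
  have ha' := (b_ordering_phi S hb fa').2 hf.
  by rewrite (alpha_b_ordering_eq k hb ha ha') /alpha_t fa' (tsum_phi _ _ hb fa').
Qed.
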